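(* Let $r>0$, $a<b$, $f\in L^\infty_{\rm loc}(\mathbb{R})$, $\alpha,\beta\in L^\infty_{\rm loc}(\mathbb{R})$. The problem $$D_ru=f\ \text{in }(a,b),\qquad u=\alpha\ \text{in }[a-r,a],\qquad u=\beta\ \text{in }[b,b+r]$$ has a unique solution $u$ on $[a-r,b+r]$ (up to null sets), given by $u=\alpha$ on $[a-r,a]$, $u=\beta$ on $[b,b+r]$, and for $x\in(a,b)$ $$u(x)=\frac{\overline k(x)}{\overline k(x)+\underline k(x)}\Big(\alpha(x-\underline k(x)r)-r^2\sum_{j=1}^{\underline k(x)-1}j\,f\big(x-(\underline k(x)-j)r\big)\Big)+\frac{\underline k(x)}{\overline k(x)+\underline k(x)}\Big(\beta(x+\overline k(x)r)-r^2\sum_{j=1}^{\overline k(x)-1}j\,f\big(x+(\overline k(x)-j)r\big)\Big)-r^2\frac{\underline k(x)\overline k(x)}{\overline k(x)+\underline k(x)}f(x),$$ where $\overline k(x):=\lceil (b-x)/r\rceil$ and $\underline k(x):=\lceil (x-a)/r\rceil$.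
   Context: $D_ru(x):=\dfrac{u(x+r)+u(x-r)-2u(x)}{r^2}$. The equation $D_ru=f$ in $(a,b)$ is required for a.e. $x\in(a,b)$. $\lceil t\rceil$ denotes the smallest integer $\ge t$. *)

From Stdlib Require Import Reals Lra Lia ZArith.
Open Scope R_scope.

(* [outer_le E m] : the Lebesgue outer measure of E is <= m, i.e. for every
   eps > 0, E is covered by countably many open intervals (c n, d n) whose
   total length is <= m + eps. *)
Definition outer_le (E : R -> Prop) (m : R) : Prop :=
  forall eps : R, 0 < eps ->
    exists c d : nat -> R,
      (forall n, c n <= d n) /\
      (forall x, E x -> exists n, c n < x < d n) /\
      (forall n, sum_f_R0 (fun k => d k - c k) n <= m + eps).

Definition null_set (N : R -> Prop) : Prop := outer_le N 0.

Definition ae_on (S : R -> Prop) (P : R -> Prop) : Prop :=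
  exists N : R -> Prop, null_set N /\ forall x, S x -> ~ N x -> P x.

(* Caratheodory (Lebesgue) measurability of a set E:
   m*(A /\ E) + m*(A \ E) <= m*(A) for every A. *)
Definition measurable_set (E : R -> Prop) : Prop :=
  forall (A : R -> Prop) (m : R), outer_le A m ->
    exists y z : R, y + z <= m /\
      outer_le (fun x => A x /\ E x) y /\ outer_le (fun x => A x /\ ~ E x) z.

Definition measurable_fun (g : R -> R) : Prop :=
  forall c : R, measurable_set (fun x => c < g x).

Definition Linf_loc (g : R -> R) : Prop :=
  measurable_fun g /\
  forall p q : R, exists M : R, ae_on (fun x => p <= x <= q) (fun x => Rabs (g x) <= M).

Definition Dr (r : R) (u : R -> R) (x : R) : R :=
  (u (x + r) + u (x - r) - 2 * u x) / r ^ 2.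

(* ceiling: smallest integer >= t  (Stdlib's [up t] is the smallest integer > t) *)
Definition Rceil (t : R) : Z := (1 - up (- t))%Z.

Fixpoint sum_1 (n : nat) (g : nat -> R) : R :=
  match n with
  | O => 0
  | S m => sum_1 m g + g (S m)
  end.

Definition kbar (b r x : R) : Z := Rceil ((b - x) / r).
Definition kund (a r x : R) : Z := Rceil ((x - a) / r).

Definition sol (r a b : R) (f al be : R -> R) (x : R) : R :=
  if Rle_dec x a then al x
  else if Rle_dec b x then be x
  else
    let K := IZR (kbar b r x) in
    let L := IZR (kund a r x) in
    let nK := Z.to_nat (kbar b r x) in
    let nL := Z.to_nat (kund a r x) in
    K / (K + L) *
      (al (x - L * r) - r ^ 2 * sum_1 (nL - 1) (fun j => INR j * f (x - (L - INR j) * r)))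
    + L / (K + L) *
      (be (x + K * r) - r ^ 2 * sum_1 (nK - 1) (fun j => INR j * f (x + (K - INR j) * r)))
    - r ^ 2 * (L * K / (K + L)) * f x.

(* The equation only couples the values of u along a lattice x + r Z.  For
   a < x < b let l = ceil((x-a)/r), k = ceil((b-x)/r); then x - l r lies in
   [a-r,a], x + k r lies in [b,b+r] and the l + k - 1 intermediate lattice
   points lie in (a,b). *)
From Stdlib Require Import Reals Lra Lia ZArith.
Open Scope R_scope.

(** Null sets *)

Lemma null_set_mono (A B : R -> Prop) :
  null_set A -> (forall x, B x -> A x) -> null_set B.
Proof.
  intros HA HBA eps Heps. destruct (HA eps Heps) as (c & d & Hcd & Hcov & Hsum).
  exists c, d. split; [exact Hcd | split; [| exact Hsum]].
  intros x Hx. apply Hcov, HBA, Hx.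
Qed.

Lemma null_set_empty : null_set (fun _ => False).
Proof.
  intros eps Heps. exists (fun _ => 0), (fun _ => 0). split; [|split].
  - intros; lra.
  - intros x [].
  - intros n. induction n; simpl; lra.
Qed.

Lemma null_set_translate (N : R -> Prop) (t : R) :
  null_set N -> null_set (fun x => N (x + t)).
Proof.
  intros HN eps Heps. destruct (HN eps Heps) as (c & d & Hcd & Hcov & Hsum).
  exists (fun n => c n - t), (fun n => d n - t). split; [|split].
  - intros n. specialize (Hcd n). lra.
  - intros x Hx. destruct (Hcov _ Hx) as [n Hn]. exists n. lra.
  - intros n. rewrite (sum_eq _ (fun k => d k - c k)); [apply Hsum|]. intros; lra.
Qed.

(* Merging two covers into one: the sequence g 0, h 0, g 1, h 1, ... *)
Definition interleave (g h : nat -> R) (n : nat) : R :=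
  if Nat.even n then g (Nat.div2 n) else h (Nat.div2 n).

Lemma interleave_even g h m : interleave g h (2 * m) = g m.
Proof. unfold interleave. rewrite Nat.even_even, Nat.div2_double. reflexivity. Qed.

Lemma interleave_odd g h m : interleave g h (S (2 * m)) = h m.
Proof.
  unfold interleave. replace (S (2 * m)) with (2 * m + 1)%nat by lia.
  rewrite Nat.even_odd, Nat.div2_odd'. reflexivity.
Qed.

Lemma sum_interleave g h m :
  sum_f_R0 (interleave g h) (S (2 * m)) = sum_f_R0 g m + sum_f_R0 h m.
Proof.
  induction m as [|m IH].
  - exact (f_equal2 Rplus (interleave_even g h 0) (interleave_odd g h 0)).
  - replace (S (2 * S m)) with (S (S (S (2 * m)))) by lia.
    change (sum_f_R0 (interleave g h) (S (S (S (2 * m))))) with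
      (sum_f_R0 (interleave g h) (S (2 * m)) + interleave g h (S (S (2 * m)))
       + interleave g h (S (S (S (2 * m))))).
    replace (S (S (2 * m))) with (2 * S m)%nat by lia.
    rewrite IH, interleave_even, interleave_odd. simpl. ring.
Qed.

Lemma sum_f_R0_le_add (g : nat -> R) : (forall n, 0 <= g n) ->
  forall n k, sum_f_R0 g n <= sum_f_R0 g (n + k).
Proof.
  intros Hg n k. induction k as [|k IH].
  - rewrite Nat.add_0_r; lra.
  - rewrite Nat.add_succ_r. simpl. specialize (Hg (S (n + k))). lra.
Qed.

Lemma null_set_union (A B : R -> Prop) :
  null_set A -> null_set B -> null_set (fun x => A x \/ B x).
Proof.
  intros HA HB eps Heps.
  destruct (HA (eps / 2) ltac:(lra)) as (c1 & d1 & Hcd1 & Hcov1 & Hsum1).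
  destruct (HB (eps / 2) ltac:(lra)) as (c2 & d2 & Hcd2 & Hcov2 & Hsum2).
  exists (interleave c1 c2), (interleave d1 d2).
  assert (Hlen : forall n, interleave d1 d2 n - interleave c1 c2 n
                           = interleave (fun k => d1 k - c1 k) (fun k => d2 k - c2 k) n).
  { intros n. unfold interleave. destruct (Nat.even n); reflexivity. }
  split; [|split].
  - intros n. unfold interleave. destruct (Nat.even n); auto.
  - intros x [Hx | Hx].
    + destruct (Hcov1 _ Hx) as [n Hn]. exists (2 * n)%nat.
      rewrite !interleave_even. exact Hn.
    + destruct (Hcov2 _ Hx) as [n Hn]. exists (S (2 * n)).
      rewrite !interleave_odd. exact Hn.
  - intros n. rewrite (sum_eq _ _ n (fun k _ => Hlen k)).
    apply Rle_trans with
      (sum_f_R0 (interleave (fun k => d1 k - c1 k) (fun k => d2 k - c2 k)) (S (2 * n))).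
    + replace (S (2 * n)) with (n + S n)%nat by lia. apply sum_f_R0_le_add.
      intros k. unfold interleave. destruct (Nat.even k);
        [specialize (Hcd1 (Nat.div2 k)) | specialize (Hcd2 (Nat.div2 k))]; lra.
    + rewrite sum_interleave. specialize (Hsum1 n). specialize (Hsum2 n). lra.
Qed.

Lemma null_set_finite_union (N : nat -> R -> Prop) :
  (forall j, null_set (N j)) ->
  forall m, null_set (fun x => exists j, (j <= m)%nat /\ N j x).
Proof.
  intros HN m. induction m as [|m IH].
  - apply null_set_mono with (N 0%nat); [apply HN|].
    intros x [j [Hj Hx]]. replace j with 0%nat in Hx by lia. exact Hx.
  - apply null_set_mono with (fun x => (exists j, (j <= m)%nat /\ N j x) \/ N (S m) x).
    + apply null_set_union; auto.
    + intros x [j [Hj Hx]]. destruct (Nat.eq_dec j (S m)) as [-> | Hne]; [right; auto|].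
      left; exists j; split; [lia | auto].
Qed.

Lemma null_set_lattice_translates (N : R -> Prop) (r : R) (M : nat) :
  null_set N -> null_set (fun x => exists j, (j <= 2 * M)%nat /\ N (x + (INR j - INR M) * r)).
Proof.
  intros HN. apply (null_set_finite_union (fun j x => N (x + (INR j - INR M) * r))).
  intros j. apply null_set_translate, HN.
Qed.

(** Discrete uniqueness on a lattice *)

(* Vanishing second differences make w linear, w i = i * w 1; the two end
   conditions then force w = 0. *)
Lemma second_difference_zero (w : nat -> R) (n : nat) :
  w 0%nat = 0 -> w n = 0 ->
  (forall i, (0 < i < n)%nat -> w (S i) + w (i - 1)%nat - 2 * w i = 0) ->
  forall i, (i <= n)%nat -> w i = 0.
Proof.
  intros Hw0 Hwn Hrec.
  assert (Hlin : forall i, (S i <= n)%nat ->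
            w i = INR i * w 1%nat /\ w (S i) = INR (S i) * w 1%nat).
  { induction i as [|i IH]; intros Hi.
    - rewrite Hw0. simpl. split; ring.
    - destruct (IH ltac:(lia)) as [E1 E2]. split; [exact E2|].
      pose proof (Hrec (S i) ltac:(lia)) as Hi'.
      replace (S i - 1)%nat with i in Hi' by lia.
      rewrite E1, E2 in Hi'. rewrite !S_INR in *. lra. }
  intros i Hi. destruct n as [|n'].
  - replace i with 0%nat by lia. exact Hw0.
  - assert (Hw1 : w 1%nat = 0).
    { destruct (Hlin n' ltac:(lia)) as [_ E]. rewrite E in Hwn.
      assert (0 < INR (S n')) by (apply lt_0_INR; lia). nra. }
    destruct (Nat.eq_dec i (S n')) as [-> | Hne]; [exact Hwn|].
    destruct (Hlin i ltac:(lia)) as [E _]. rewrite E, Hw1. ring.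
Qed.

Lemma lattice_agree (u v : R -> R) (r x0 : R) (n : nat) : r <> 0 ->
  u x0 = v x0 -> u (x0 + INR n * r) = v (x0 + INR n * r) ->
  (forall i, (0 < i < n)%nat -> Dr r u (x0 + INR i * r) = Dr r v (x0 + INR i * r)) ->
  forall i, (i <= n)%nat -> u (x0 + INR i * r) = v (x0 + INR i * r).
Proof.
  intros Hr H0 Hn HD i Hi.
  set (w := fun i => u (x0 + INR i * r) - v (x0 + INR i * r)).
  enough (w i = 0) by (unfold w in *; lra).
  apply (second_difference_zero w n); auto.
  - unfold w. simpl INR. rewrite !Rmult_0_l, !Rplus_0_r. lra.
  - unfold w. lra.
  - intros j Hj. specialize (HD j Hj). unfold Dr in HD. unfold w.
    replace (x0 + INR (S j) * r) with (x0 + INR j * r + r) by (rewrite S_INR; ring).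
    replace (x0 + INR (j - 1) * r) with (x0 + INR j * r - r)
      by (rewrite minus_INR by lia; simpl; ring).
    assert (r ^ 2 <> 0) by (apply pow_nonzero, Hr).
    apply (Rmult_eq_compat_r (r ^ 2)) in HD. field_simplify in HD; auto. lra.
Qed.

(** The ceiling and the step counts *)

Lemma Rceil_spec t : IZR (Rceil t) - 1 < t <= IZR (Rceil t).
Proof. unfold Rceil; rewrite minus_IZR; destruct (archimed (- t)); lra. Qed.

Lemma Rceil_unique t z : IZR z - 1 < t <= IZR z -> Rceil t = z.
Proof.
  intros Hz. pose proof (Rceil_spec t).
  assert (A1 : IZR (z - Rceil t) < 1) by (rewrite minus_IZR; lra).
  assert (A2 : IZR (-1) < IZR (z - Rceil t)) by (rewrite minus_IZR; simpl; lra).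
  apply lt_IZR in A1. apply lt_IZR in A2. lia.
Qed.

Lemma Rceil_shift t z : Rceil (t + IZR z) = (Rceil t + z)%Z.
Proof. apply Rceil_unique. rewrite plus_IZR. pose proof (Rceil_spec t). lra. Qed.

Definition lsteps (a r x : R) : nat := Z.to_nat (kund a r x).
Definition ksteps (b r x : R) : nat := Z.to_nat (kbar b r x).

Definition F (r : R) (f al be : R -> R) (y : R) (l k : nat) : R :=
  INR k / (INR k + INR l) *
    (al (y - INR l * r) - r ^ 2 * sum_1 (l - 1) (fun j => INR j * f (y - (INR l - INR j) * r)))
  + INR l / (INR k + INR l) *
    (be (y + INR k * r) - r ^ 2 * sum_1 (k - 1) (fun j => INR j * f (y + (INR k - INR j) * r)))
  - r ^ 2 * (INR l * INR k / (INR k + INR l)) * f y.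

Lemma sum_1_ext n g1 g2 : (forall j, g1 j = g2 j) -> sum_1 n g1 = sum_1 n g2.
Proof. intros H; induction n; simpl; [reflexivity|]. rewrite IHn, H; reflexivity. Qed.

Lemma sum_1_pred m (G : nat -> R) :
  sum_1 (m - 1) (fun j => INR j * G j) = sum_1 m (fun j => INR j * G j) - INR m * G m.
Proof. destruct m; simpl; [ring|]. rewrite Nat.sub_0_r. ring. Qed.

Section Formula.
Variables (r : R) (f al be : R -> R).

(* [F] written through the two end points p0 = y - l r and pn = y + k r of
   the lattice segment through y; these do not move when y moves along it. *)
Lemma F_endpoints y l k p0 pn : y - INR l * r = p0 -> y + INR k * r = pn ->
  F r f al be y l k = INR k / (INR k + INR l) *
      (al p0 - r ^ 2 * sum_1 (l - 1) (fun j => INR j * f (p0 + INR j * r)))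
    + INR l / (INR k + INR l) *
      (be pn - r ^ 2 * sum_1 (k - 1) (fun j => INR j * f (pn - INR j * r)))
    - r ^ 2 * (INR l * INR k / (INR k + INR l)) * f y.
Proof.
  intros <- <-. unfold F.
  rewrite (sum_1_ext (l - 1) _ (fun j => INR j * f (y - INR l * r + INR j * r)))
    by (intros j; do 2 f_equal; ring).
  rewrite (sum_1_ext (k - 1) _ (fun j => INR j * f (y + INR k * r - INR j * r)))
    by (intros j; do 2 f_equal; ring).
  reflexivity.
Qed.

Lemma F_second_difference x l k :
  F r f al be (x + r) (S (S l)) k + F r f al be (x - r) l (S (S k))
  - 2 * F r f al be x (S l) (S k) = r ^ 2 * f x.
Proof.
  set (p0 := x - INR (S l) * r). set (pn := x + INR (S k) * r).
  rewrite (F_endpoints (x + r) (S (S l)) k p0 pn) by (unfold p0, pn; rewrite !S_INR; ring).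
  rewrite (F_endpoints (x - r) l (S (S k)) p0 pn) by (unfold p0, pn; rewrite !S_INR; ring).
  rewrite (F_endpoints x (S l) (S k) p0 pn) by (unfold p0, pn; rewrite !S_INR; ring).
  replace (S (S l) - 1)%nat with (S l) by lia.
  replace (S (S k) - 1)%nat with (S k) by lia.
  replace (S l - 1)%nat with l by lia.
  replace (S k - 1)%nat with k by lia.
  rewrite !sum_1_pred.
  change (sum_1 (S l) ?g) with (sum_1 l g + g (S l)).
  change (sum_1 (S k) ?g) with (sum_1 k g + g (S k)).
  cbv beta.
  replace (p0 + INR (S l) * r) with x by (unfold p0; ring).
  replace (pn - INR (S k) * r) with x by (unfold pn; ring).
  replace (p0 + INR l * r) with (x - r) by (unfold p0; rewrite S_INR; ring).
  replace (pn - INR k * r) with (x + r) by (unfold pn; rewrite S_INR; ring).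
  pose proof (pos_INR l). pose proof (pos_INR k).
  rewrite !S_INR. field. lra.
Qed.

Lemma F_right_end y l : (1 <= l)%nat -> F r f al be y l 0 = be y.
Proof.
  intros Hl. unfold F. simpl (sum_1 (0 - 1) _). simpl INR.
  replace (y + 0 * r) with y by ring.
  assert (0 < INR l) by (apply lt_0_INR; lia). field. lra.
Qed.

Lemma F_left_end y k : (1 <= k)%nat -> F r f al be y 0 k = al y.
Proof.
  intros Hk. unfold F. simpl (sum_1 (0 - 1) _). simpl INR.
  replace (y - 0 * r) with y by ring.
  assert (0 < INR k) by (apply lt_0_INR; lia). field. lra.
Qed.

End Formula.

Section Steps.
Variables (r a b : R).
Hypothesis (Hr : 0 < r).

Lemma ceil_div_bounds t z : IZR z - 1 < t / r <= IZR z -> (IZR z - 1) * r < t <= IZR z * r.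
Proof. intros H. replace t with (t / r * r) by (field; lra). split; nra. Qed.

Lemma lsteps_spec x : a < x ->
  (1 <= lsteps a r x)%nat /\ IZR (kund a r x) = INR (lsteps a r x) /\
  (INR (lsteps a r x) - 1) * r < x - a <= INR (lsteps a r x) * r.
Proof.
  intros Hx. pose proof (Rceil_spec ((x - a) / r)) as Hc. fold (kund a r x) in Hc.
  assert (0 < (x - a) / r) by (apply Rdiv_lt_0_compat; lra).
  assert (Hpos : (0 < kund a r x)%Z) by (apply lt_IZR; simpl; lra).
  assert (E : IZR (kund a r x) = INR (lsteps a r x))
    by (unfold lsteps; rewrite INR_IZR_INZ, Z2Nat.id by lia; reflexivity).
  rewrite <- E. split; [unfold lsteps; lia|]. split; [reflexivity|].
  apply ceil_div_bounds, Hc.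
Qed.

Lemma ksteps_spec x : x < b ->
  (1 <= ksteps b r x)%nat /\ IZR (kbar b r x) = INR (ksteps b r x) /\
  (INR (ksteps b r x) - 1) * r < b - x <= INR (ksteps b r x) * r.
Proof.
  intros Hx. pose proof (Rceil_spec ((b - x) / r)) as Hc. fold (kbar b r x) in Hc.
  assert (0 < (b - x) / r) by (apply Rdiv_lt_0_compat; lra).
  assert (Hpos : (0 < kbar b r x)%Z) by (apply lt_IZR; simpl; lra).
  assert (E : IZR (kbar b r x) = INR (ksteps b r x))
    by (unfold ksteps; rewrite INR_IZR_INZ, Z2Nat.id by lia; reflexivity).
  rewrite <- E. split; [unfold ksteps; lia|]. split; [reflexivity|].
  apply ceil_div_bounds, Hc.
Qed.

Lemma kund_shift x s : kund a r (x + IZR s * r) = (kund a r x + s)%Z.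
Proof. unfold kund. rewrite <- Rceil_shift. f_equal. field. lra. Qed.

Lemma kbar_shift x s : kbar b r (x - IZR s * r) = (kbar b r x + s)%Z.
Proof. unfold kbar. rewrite <- Rceil_shift. f_equal. field. lra. Qed.

Lemma lsteps_succ x : a < x -> lsteps a r (x + r) = S (lsteps a r x).
Proof.
  intros Hx. destruct (lsteps_spec x Hx) as [H1 _]. unfold lsteps in *.
  rewrite <- (Rmult_1_l r) at 2. rewrite kund_shift. lia.
Qed.

Lemma lsteps_pred x : a < x -> lsteps a r (x - r) = (lsteps a r x - 1)%nat.
Proof.
  intros Hx. destruct (lsteps_spec x Hx) as [H1 _]. unfold lsteps in *.
  replace (x - r) with (x + IZR (-1) * r) by (simpl; ring). rewrite kund_shift. lia.
Qed.

Lemma ksteps_succ x : x < b -> ksteps b r (x - r) = S (ksteps b r x).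
Proof.
  intros Hx. destruct (ksteps_spec x Hx) as [H1 _]. unfold ksteps in *.
  rewrite <- (Rmult_1_l r) at 2. rewrite kbar_shift. lia.
Qed.

Lemma ksteps_pred x : x < b -> ksteps b r (x + r) = (ksteps b r x - 1)%nat.
Proof.
  intros Hx. destruct (ksteps_spec x Hx) as [H1 _]. unfold ksteps in *.
  replace (x + r) with (x - IZR (-1) * r) by (simpl; ring). rewrite kbar_shift. lia.
Qed.

Lemma steps_bounded M x : b - a < INR M * r -> a < x < b ->
  (lsteps a r x <= M)%nat /\ (ksteps b r x <= M)%nat.
Proof.
  intros HM Hx. destruct (lsteps_spec x ltac:(lra)) as (_ & _ & Hl & _).
  destruct (ksteps_spec x ltac:(lra)) as (_ & _ & Hk & _).
  split; apply Nat.lt_succ_r, INR_lt; rewrite S_INR; nra.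
Qed.

End Steps.

(** Existence: the explicit formula solves the problem *)

Section Solution.
Variables (r a b : R) (f al be : R -> R).
Hypotheses (Hr : 0 < r) (Hab : a < b).

Notation sol := (sol r a b f al be).
Notation F := (F r f al be).

Lemma sol_left x : x <= a -> sol x = al x.
Proof. intros Hx. unfold sol. destruct (Rle_dec x a); [reflexivity | lra]. Qed.

Lemma sol_right x : b <= x -> sol x = be x.
Proof.
  intros Hx. unfold sol. destruct (Rle_dec x a); [lra|].
  destruct (Rle_dec b x); [reflexivity | lra].
Qed.

Lemma sol_interior x : a < x < b -> sol x = F x (lsteps a r x) (ksteps b r x).
Proof.
  intros Hx. destruct (lsteps_spec r a Hr x ltac:(lra)) as (_ & El & _).
  destruct (ksteps_spec r b Hr x ltac:(lra)) as (_ & Ek & _).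
  unfold sol. destruct (Rle_dec x a); [lra|]. destruct (Rle_dec b x); [lra|].
  cbv zeta. rewrite El, Ek. reflexivity.
Qed.

(* At x + r the formula is [F] with one more step to the left and one fewer
   to the right; when no step is left, x + r is in [b, b + r]. *)
Lemma sol_right_neighbour x : a < x < b ->
  sol (x + r) = F (x + r) (S (lsteps a r x)) (ksteps b r x - 1).
Proof.
  intros Hx. destruct (ksteps_spec r b Hr x ltac:(lra)) as (Hk1 & _ & Hk & Hk').
  destruct (Nat.eq_dec (ksteps b r x) 1) as [Ek | Ek].
  - rewrite Ek in *. rewrite F_right_end by lia. apply sol_right. simpl in Hk'. lra.
  - assert (Hk2 : 2 <= INR (ksteps b r x)) by (apply (le_INR 2); lia).
    rewrite sol_interior by nra. rewrite lsteps_succ, ksteps_pred by lra. reflexivity.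
Qed.

Lemma sol_left_neighbour x : a < x < b ->
  sol (x - r) = F (x - r) (lsteps a r x - 1) (S (ksteps b r x)).
Proof.
  intros Hx. destruct (lsteps_spec r a Hr x ltac:(lra)) as (Hl1 & _ & Hl & Hl').
  destruct (Nat.eq_dec (lsteps a r x) 1) as [El | El].
  - rewrite El in *. rewrite F_left_end by lia. apply sol_left. simpl in Hl'. lra.
  - assert (Hl2 : 2 <= INR (lsteps a r x)) by (apply (le_INR 2); lia).
    rewrite sol_interior by nra. rewrite lsteps_pred, ksteps_succ by lra. reflexivity.
Qed.

Lemma sol_solves x : a < x < b -> Dr r sol x = f x.
Proof.
  intros Hx. unfold Dr.
  rewrite sol_right_neighbour, sol_left_neighbour, sol_interior by exact Hx.
  destruct (lsteps_spec r a Hr x ltac:(lra)) as [Hl _].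
  destruct (ksteps_spec r b Hr x ltac:(lra)) as [Hk _].
  destruct (lsteps a r x) as [|l]; [lia|]. destruct (ksteps b r x) as [|k]; [lia|].
  replace (S l - 1)%nat with l by lia. replace (S k - 1)%nat with k by lia.
  rewrite F_second_difference. field. lra.
Qed.

(** Uniqueness *)

Definition solves_at (u : R -> R) (y : R) : Prop :=
  (a < y < b -> Dr r u y = f y) /\
  (a - r <= y <= a -> u y = al y) /\
  (b <= y <= b + r -> u y = be y).

Lemma sol_unique_at u x : a < x < b ->
  (forall i, (i <= lsteps a r x + ksteps b r x)%nat ->
     solves_at u (x - INR (lsteps a r x) * r + INR i * r)) ->
  u x = sol x.
Proof.
  intros Hx Hu.
  destruct (lsteps_spec r a Hr x ltac:(lra)) as (_ & _ & Hl1 & Hl2).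
  destruct (ksteps_spec r b Hr x ltac:(lra)) as (_ & _ & Hk1 & Hk2).
  set (l := lsteps a r x) in *. set (k := ksteps b r x) in *.
  set (x0 := x - INR l * r) in *.
  replace x with (x0 + INR l * r) by (unfold x0; ring).
  apply (lattice_agree u sol r x0 (l + k)); [lra | | | | lia].
  - destruct (Hu 0%nat ltac:(lia)) as (_ & Hleft & _).
    simpl INR in Hleft. rewrite Rmult_0_l, Rplus_0_r in Hleft.
    rewrite sol_left by (unfold x0; lra). apply Hleft. unfold x0. lra.
  - assert (Ep : x0 + INR (l + k) * r = x + INR k * r) by (unfold x0; rewrite plus_INR; ring).
    destruct (Hu (l + k)%nat ltac:(lia)) as (_ & _ & Hright).
    rewrite Ep in *. rewrite sol_right by lra. apply Hright. lra.
  - intros i Hi.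
    assert (Hin : a < x0 + INR i * r < b).
    { assert (1 <= INR i) by (apply (le_INR 1); lia).
      assert (INR i + 1 <= INR l + INR k)
        by (rewrite <- S_INR, <- plus_INR; apply le_INR; lia).
      unfold x0. split; nra. }
    destruct (Hu i ltac:(lia)) as (Heq & _ & _).
    rewrite sol_solves by exact Hin. exact (Heq Hin).
Qed.

(* Off the (null) union of the lattice translates of the three exceptional
   sets, every lattice segment used by [sol_unique_at] consists of good points. *)
Lemma sol_unique (u : R -> R) :
  ae_on (fun x => a < x < b) (fun x => Dr r u x = f x) ->
  ae_on (fun x => a - r <= x <= a) (fun x => u x = al x) ->
  ae_on (fun x => b <= x <= b + r) (fun x => u x = be x) ->
  ae_on (fun x => a - r <= x <= b + r) (fun x => u x = sol x).
Proof.
  intros [N1 [HN1 H1]] [N2 [HN2 H2]] [N3 [HN3 H3]].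
  set (N := fun y => N1 y \/ N2 y \/ N3 y).
  assert (HN : null_set N) by (apply null_set_union; [| apply null_set_union]; auto).
  assert (Hgood : forall y, ~ N y -> solves_at u y).
  { intros y Hy. unfold N in Hy. split; [| split]; intros Hrange;
      [apply H1 | apply H2 | apply H3]; tauto. }
  destruct (INR_archimed r (b - a) Hr) as [M HM].
  exists (fun x => exists j, (j <= 2 * M)%nat /\ N (x + (INR j - INR M) * r)).
  split; [apply null_set_lattice_translates, HN|].
  intros x Hx Hexc.
  assert (Hlat : forall j, (j <= 2 * M)%nat -> solves_at u (x + (INR j - INR M) * r))
    by (intros j Hj; apply Hgood; intros HNj; apply Hexc; exists j; auto).
  assert (Hx0 : solves_at u x).
  { specialize (Hlat M ltac:(lia)). replace (x + (INR M - INR M) * r) with x in Hlat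
      by ring. exact Hlat. }
  destruct (Rle_dec x a) as [Hxa | Hxa]; [rewrite sol_left by lra; apply Hx0; lra|].
  destruct (Rle_dec b x) as [Hxb | Hxb]; [rewrite sol_right by lra; apply Hx0; lra|].
  destruct (steps_bounded r a b Hr M x ltac:(lra) ltac:(lra)) as [HlM HkM].
  apply sol_unique_at; [lra|]. intros i Hi.
  specialize (Hlat (M + i - lsteps a r x)%nat ltac:(lia)).
  rewrite minus_INR, plus_INR in Hlat by lia.
  replace (x - INR (lsteps a r x) * r + INR i * r)
    with (x + (INR M + INR i - INR (lsteps a r x) - INR M) * r) by ring.
  exact Hlat.
Qed.

End Solution.

Theorem theorem1p9 (r a b : R) (f al be : R -> R) :
  0 < r -> a < b ->
  Linf_loc f -> Linf_loc al -> Linf_loc be ->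
  (* existence: the explicit function is a solution *)
  (ae_on (fun x => a < x < b) (fun x => Dr r (sol r a b f al be) x = f x) /\
   (forall x, a - r <= x <= a -> sol r a b f al be x = al x) /\
   (forall x, b <= x <= b + r -> sol r a b f al be x = be x)) /\
  (* uniqueness up to null sets on [a-r, b+r] *)
  (forall u : R -> R,
     ae_on (fun x => a < x < b) (fun x => Dr r u x = f x) ->
     ae_on (fun x => a - r <= x <= a) (fun x => u x = al x) ->
     ae_on (fun x => b <= x <= b + r) (fun x => u x = be x) ->
     ae_on (fun x => a - r <= x <= b + r) (fun x => u x = sol r a b f al be x)).
Proof.
  intros Hr Hab _ _ _. split; [split; [| split] |].
  - exists (fun _ => False). split; [exact null_set_empty|].
    intros x Hx _. apply sol_solves; assumption.
  - intros x Hx. apply sol_left. lra.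
  - intros x Hx. apply sol_right; lra.
  - intros u. apply sol_unique; assumption.
Qed.
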